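(* Let $s\ge4$ be an integer, $\psi_s(z):=z^{s-1}(z+s)-(s-1)^{s-1}$, and $\rho_m:=\min\{|s+\alpha|:\alpha$ a root of $\psi_s$ with $\operatorname{Im}\alpha>0\}$. (1) If $s$ is even then $\rho_m>s\sin(\pi/(s-1))>\pi$. (2) If $s\ge7$ is odd then $\rho_m>s\sin(2\pi/(s-1))$; if $s=5$ then $\rho_m>5\sin(2\pi/5)$.
   Context: For $s\ge4$, $\psi_s$ has $\lfloor s/2\rfloor-1\ge1$ roots in the open upper half-plane. *)

From HB Require Import structures.
From mathcomp Require Import all_boot all_order all_algebra.
From mathcomp Require Import complex.
From mathcomp Require Import all_classical all_reals all_analysis.
Set Implicit Arguments. Unset Strict Implicit. Unset Printing Implicit Defensive.
Import Order.TTheory GRing.Theory Num.Theory.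
Local Open Scope ring_scope.
Local Open Scope classical_set_scope.

Definition psi (R : realType) (s : nat) : {poly R[i]} :=
  'X^(s.-1) * ('X + (s%:R)%:P) - ((s.-1 ^ s.-1)%N%:R)%:P.

(* rho_m = min { |s + alpha| : alpha root of psi_s, Im alpha > 0 };
   the set is finite and (for s >= 4) nonempty, so its infimum is the minimum. *)
Definition cabs (R : realType) (z : R[i]) : R :=
  Num.sqrt (complex.Re z ^+ 2 + complex.Im z ^+ 2).

Definition rho_m (R : realType) (s : nat) : R :=
  inf [set cabs ((s%:R : R[i]) + a) | a in
        [set a : R[i] | root (psi R s) a /\ 0 < complex.Im a]].

(** Write a root of psi_s in the upper half-plane as r e^(it) with 0 < t < pi,
    and let n = s - 1.  The imaginary part of r^n e^(int) (r e^(it) + s) = n^n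
    gives r sin(st) = - s sin(nt), and combining it with the real part gives
    n^n sin(st) = s r^n sin t.  Hence sin(st) > 0 and sin(nt) < 0, so t avoids
    every interval [k pi/n, (k+1) pi/n] with k even.  As |s + r e^(it)| >= s sin t:
    - for n odd, pi/n < t < pi - pi/n gives the bound s sin(pi/n);
    - for n even, either cos t >= 0 and |s + r e^(it)| > s, or t > pi/2.  In the
      latter case t = pi - e with n e < pi is impossible, because eliminating r
      gives n^n sin(se)^s = s^s sin e sin(ne)^n while the decrease of sin x / x
      gives n sin(se) < s sin(ne) and sin(se) < s sin e; the band k = n - 2 then
      leaves pi/2 < t < pi - 2 pi/n and the bound s sin(2 pi/n).
    The minimum is over a finite set, which is nonempty: if all roots were real,
    their power sums would be sum x^2 = s^2 and sum x^3 = - s^3, so the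
    nonnegative terms x^2 (x + s) would sum to 0, forcing a root at 0 or -s. *)
From HB Require Import structures.
From mathcomp Require Import all_boot all_order all_algebra.
From mathcomp Require Import complex.
From mathcomp Require Import all_classical all_reals all_analysis.
From mathcomp Require Import ring lra zify.
Import Order.TTheory GRing.Theory Num.Theory.
Import numFieldNormedType.Exports.
Local Open Scope ring_scope.

Section ElementaryBounds.
Context {R : realType}.
Implicit Types (f g df dg : R -> R) (a b x y : R).

Lemma MVT_is_derive [f df a b] : (forall x, is_derive x 1 f (df x)) -> a < b ->
  exists2 c, a < c < b & f b - f a = df c * (b - a).
Proof.
move=> fdf ab.
have fcont : continuous f.
  move=> x; apply/differentiable_continuous/derivable1_diffP.
  by apply: ex_derive; exact: fdf.
have [c cab ->] := MVT ab (fun x _ => fdf x) (continuous_subspaceT fcont).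
by exists c; first by rewrite in_itv /= in cab.
Qed.

Lemma ger0_is_derive_le [f df a b] : (forall x, is_derive x 1 f (df x)) ->
  a <= b -> (forall x, a < x -> 0 <= df x) -> f a <= f b.
Proof.
move=> fdf; rewrite le_eqVlt => /predU1P[-> // | ab] df_ge0.
have [c /andP[ac _] fE] := MVT_is_derive fdf ab.
by rewrite -subr_ge0 fE mulr_ge0 ?df_ge0 // subr_ge0 ltW.
Qed.

Lemma le_is_derive_from0 [f g df dg] x :
  (forall y, is_derive y 1 f (df y)) -> (forall y, is_derive y 1 g (dg y)) ->
  f 0 <= g 0 -> (forall y, 0 < y -> df y <= dg y) -> 0 <= x -> f x <= g x.
Proof.
move=> fdf gdg fg0 dfg x0.
have gfd (y : R) : is_derive y 1 (fun z => g z - f z) (dg y - df y).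
  exact: is_derive_eq.
rewrite -subr_ge0 (le_trans _ (ger0_is_derive_le gfd x0 _)) ?subr_ge0 //.
by move=> y /dfg; rewrite subr_ge0.
Qed.

Lemma sin_le_id x : 0 <= x -> sin x <= x.
Proof.
have /= := le_is_derive_from0 x (@is_derive_sin R) (fun y => is_derive_id y 1).
rewrite sin0 lexx; apply=> // y _; exact: cos_le1.
Qed.

Lemma cos_ge_taylor2 x : 0 <= x -> 1 - x ^+ 2 / 2 <= cos x.
Proof.
apply: (@le_is_derive_from0 (fun x => 1 - x ^+ 2 / 2) cos (fun y => - y)).
- by move=> y; apply: is_derive_eq; rewrite /GRing.scale /=; field.
- by rewrite cos0 expr0n /= mul0r subr0.
- by move=> y y0; rewrite lerN2 sin_le_id ?ltW.
Qed.

Lemma sin_ge_taylor3 x : 0 <= x -> x - x ^+ 3 / 6 <= sin x.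
Proof.
apply: (@le_is_derive_from0 (fun x => x - x ^+ 3 / 6) sin (fun y => 1 - y ^+ 2 / 2)).
- by move=> y; apply: is_derive_eq; rewrite /GRing.scale /=; field.
- by rewrite sin0 expr0n /= mul0r subr0.
- by move=> y y0; rewrite cos_ge_taylor2 ?ltW.
Qed.

Lemma cos_le_taylor4 x : 0 <= x -> cos x <= 1 - x ^+ 2 / 2 + x ^+ 4 / 24.
Proof.
apply: (@le_is_derive_from0 cos (fun x => 1 - x ^+ 2 / 2 + x ^+ 4 / 24) _
  (fun y => - y + y ^+ 3 / 6)).
- by move=> y; apply: is_derive_eq; rewrite /GRing.scale /=; field.
- by rewrite cos0 !expr0n /= !mul0r subr0 addr0.
- by move=> y y0; have := @sin_ge_taylor3 y (ltW y0); lra.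
Qed.

Lemma pi_lt_17_5 : pi < 17 / 5 :> R.
Proof.
have cos_lt0 : cos (17 / 10 : R) < 0.
  by have := @cos_le_taylor4 (17 / 10) ltac:(lra); rewrite !exprS expr0; lra.
rewrite ltNge; apply/negP => pi_ge.
have : 0 <= cos (17 / 10 : R) by apply: cos_ge0_pihalf; have := @pi_gt0 R; lra.
lra.
Qed.

Lemma sin_piB x : sin (pi - x) = sin x.
Proof. by rewrite sinB sinpi cospi mul0r sub0r mulN1r opprK. Qed.

Lemma sin_natr_mul_piB (k : nat) x :
  sin (k%:R * (pi - x)) = - (-1) ^+ k * sin (k%:R * x).
Proof.
rewrite mulrBr addrC [_ * pi]mulr_natl alternatingn; last exact: sinDpi.
by rewrite sinN mulrN mulNr.
Qed.

Lemma sin_ge0_even_band (k : nat) x : ~~ odd k ->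
  k%:R * pi <= x <= k.+1%:R * pi -> 0 <= sin x.
Proof.
move=> k_even /andP[kx xk].
rewrite -(subrK (k%:R * pi) x) mulr_natl alternatingn; last exact: sinDpi.
rewrite -signr_odd (negbTE k_even) mul1r sin_ge0_pi // -mulr_natl.
by rewrite -natr1 mulrDl mul1r in xk; apply/andP; split; lra.
Qed.

Lemma sin_lt_between a x : 0 <= a <= pi / 2 -> a < x < pi - a -> sin a < sin x.
Proof.
move=> /andP[a0 api] /andP[ax xpia]; have pi0 := @pi_gt0 R.
have sin_lt y : a < y <= pi / 2 -> sin a < sin y.
  by move=> /andP[ay ypi]; rewrite ltr_sin // in_itv /=; apply/andP; split; lra.
have [xpi|pix] := lerP x (pi / 2); first by rewrite sin_lt ?ax.
by rewrite -[sin x]sin_piB sin_lt //; apply/andP; split; lra.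
Qed.

Lemma mul_cos_lt_sin x : 0 < x < pi -> x * cos x < sin x.
Proof.
move=> /andP[x0 xpi].
have fdf y : is_derive y 1 (fun z => z * cos z - sin z) (- (y * sin y)).
  by apply: is_derive_eq; rewrite /GRing.scale /=; ring.
have [c /andP[c0 cx] fE] := MVT_is_derive fdf x0.
rewrite mul0r sin0 !subr0 in fE.
rewrite -subr_lt0 fE mulNr oppr_lt0 !mulr_gt0 // sin_gt0_pi // c0 /=.
exact: lt_trans xpi.
Qed.

Lemma sinc_decreasing {x y} : 0 < x -> x < y -> y <= pi -> x * sin y < y * sin x.
Proof.
move=> x0 xy ypi; have xpi : x < pi by exact: lt_le_trans ypi.
have [c /andP[xc cy] sinE] := MVT_is_derive (@is_derive_sin R) xy.
have cos_lt : cos c < cos x.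
  rewrite ltr_cos // in_itv /=; apply/andP; split; lra.
have := @mul_cos_lt_sin x; rewrite x0 xpi => /(_ isT) xcos_lt.
have -> : sin y = sin x + cos c * (y - x) by rewrite -sinE; ring.
rewrite -subr_gt0.
have -> : y * sin x - x * (sin x + cos c * (y - x)) = (y - x) * (sin x - x * cos c).
  by ring.
by rewrite mulr_gt0 ?subr_gt0 // (le_lt_trans _ xcos_lt) // ler_pM2l // ltW.
Qed.

Lemma sin_mulSn_pow_lt (n : nat) x : (0 < n)%N -> 0 < x -> n%:R * x < pi ->
    0 < sin (n.+1%:R * x) ->
  n%:R ^+ n * sin (n.+1%:R * x) ^+ n.+1 < n.+1%:R ^+ n.+1 * sin x * sin (n%:R * x) ^+ n.
Proof.
move=> n_gt0 x_gt0 nx_lt sinSn_gt0; have pi_gt0 := @pi_gt0 R.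
have n_ge1 : 1 <= n%:R :> R by rewrite ler1n.
have nx_gt0 : 0 < n%:R * x by rewrite mulr_gt0 ?ltr0n.
have Snx : n.+1%:R * x = n%:R * x + x by rewrite -natr1 mulrDl mul1r.
have nx_lt_Snx : n%:R * x < n.+1%:R * x by rewrite Snx ltrDl.
have x_lt_Snx : x < n.+1%:R * x by rewrite Snx ltrDr.
have sinn_gt0 : 0 < sin (n%:R * x) by rewrite sin_gt0_pi ?nx_gt0.
have sin_gt0 : 0 < sin x by rewrite sin_gt0_pi ?x_gt0 //; nra.
have Snx_le : n.+1%:R * x <= pi.
  rewrite leNgt; apply/negP => pi_lt; move: sinSn_gt0; apply/negP; rewrite -leNgt.
  rewrite -(subrK pi (_ * x)) sinDpi oppr_le0 sin_ge0_pi //; apply/andP; split; nra.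
have lt_n : n%:R * sin (n.+1%:R * x) < n.+1%:R * sin (n%:R * x).
  have := sinc_decreasing nx_gt0 nx_lt_Snx Snx_le.
  by rewrite mulrAC [_ * x * _]mulrAC ltr_pM2r.
have lt_1 : sin (n.+1%:R * x) < n.+1%:R * sin x.
  have := sinc_decreasing x_gt0 x_lt_Snx Snx_le.
  by rewrite mulrC [_ * x * _]mulrAC ltr_pM2r.
have -> : n%:R ^+ n * sin (n.+1%:R * x) ^+ n.+1 =
    (n%:R * sin (n.+1%:R * x)) ^+ n * sin (n.+1%:R * x) by rewrite exprMn exprS; ring.
have -> : n.+1%:R ^+ n.+1 * sin x * sin (n%:R * x) ^+ n =
    (n.+1%:R * sin (n%:R * x)) ^+ n * (n.+1%:R * sin x) by rewrite exprMn exprS; ring.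
have nS_ge0 : 0 <= n%:R * sin (n.+1%:R * x) by rewrite mulr_ge0 ?ler0n ?ltW.
apply: ltr_pM; rewrite ?exprn_ge0 ?(ltW sinSn_gt0) //.
by rewrite ltrXn2r ?lt0n_neq0.
Qed.

End ElementaryBounds.

(* [psi_polar_root n r t] says that r e^(it), with r > 0 and 0 < t < pi, is a
   root of psi_(n+1): r^n e^(int) (r e^(it) + n + 1) = n^n.  The first equation
   is the imaginary part divided by r^n, the second eliminates the real part. *)
Definition psi_polar_root {R : realType} (n : nat) (r t : R) :=
  [/\ 0 < r, 0 < t < pi, r * sin (n.+1%:R * t) + n.+1%:R * sin (n%:R * t) = 0 &
      n%:R ^+ n * sin (n.+1%:R * t) = n.+1%:R * r ^+ n * sin t].

Section RootAngle.
Context {R : realType} {n : nat} {r t : R}.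
Hypothesis root : psi_polar_root n r t.

Lemma psi_polar_root_n_gt0 : (0 < n)%N.
Proof.
case: root => r_gt0 /andP[t_gt0 t_ltpi]; case: (n) => // /eqP.
by rewrite mul0r sin0 mulr0 addr0 mul1r mulf_eq0 gt_eqF // gt_eqF // sin_gt0_pi ?t_gt0.
Qed.

Lemma root_sinSn_gt0 : 0 < sin (n.+1%:R * t).
Proof.
have n_pos : 0 < n%:R :> R by rewrite ltr0n psi_polar_root_n_gt0.
case: root => r_gt0 /andP[t_gt0 t_ltpi] _ root_sin.
have : 0 < n%:R ^+ n * sin (n.+1%:R * t).
  by rewrite root_sin !mulr_gt0 ?exprn_gt0 ?ltr0n ?sin_gt0_pi ?t_gt0.
by rewrite pmulr_rgt0 // exprn_gt0.
Qed.

Lemma root_sinn_lt0 : sin (n%:R * t) < 0.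
Proof.
case: root => r_gt0 _ /eqP; rewrite addr_eq0 => /eqP root_Im _.
have : n.+1%:R * sin (n%:R * t) < 0.
  by rewrite -oppr_gt0 -root_Im mulr_gt0 ?root_sinSn_gt0.
by rewrite pmulr_rlt0 ?ltr0n.
Qed.

Lemma root_angle_notin_band (k : nat) : ~~ odd k ->
  ~ (k%:R * pi / n%:R <= t <= k.+1%:R * pi / n%:R).
Proof.
have n_pos : 0 < n%:R :> R by rewrite ltr0n psi_polar_root_n_gt0.
move=> k_even /andP[kt tk]; move: root_sinn_lt0; apply/negP; rewrite -leNgt.
apply: (@sin_ge0_even_band R k) => //.
by move: kt tk; rewrite ler_pdivrMr // ler_pdivlMr // [t * _]mulrC => -> ->.
Qed.

Lemma root_angle_gt : pi / n%:R < t.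
Proof.
have [_ /andP[t_gt0 _] _ _] := root.
rewrite ltNge; apply/negP => tle; apply: (@root_angle_notin_band 0) => //.
by rewrite mul0r mul0r (ltW t_gt0) mul1r.
Qed.

Lemma root_angle_lt_odd : odd n -> t < pi - pi / n%:R.
Proof.
have [_ /andP[_ t_ltpi] _ _] := root.
have n_gt0 := psi_polar_root_n_gt0; have n_pos : 0 < n%:R :> R by rewrite ltr0n.
move=> n_odd; rewrite ltNge; apply/negP => tge.
have nE : n.-1.+1 = n := prednK n_gt0.
apply: (@root_angle_notin_band n.-1); first by rewrite -nE in n_odd.
rewrite nE [n%:R * _ / _]mulrAC divff ?mul1r ?lt0r_neq0 // (ltW t_ltpi) andbT.
rewrite -subn1 natrB // (_ : (n%:R - 1) * pi / n%:R = pi - pi / n%:R) //.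
by field; exact: lt0r_neq0.
Qed.

Lemma root_sin_pow :
  n%:R ^+ n * sin (n.+1%:R * t) ^+ n.+1 = n.+1%:R ^+ n.+1 * sin t * (- sin (n%:R * t)) ^+ n.
Proof.
have [_ _ root_Im root_sin] := root.
have sinnE : n.+1%:R * - sin (n%:R * t) = r * sin (n.+1%:R * t).
  by move/eqP: root_Im; rewrite addr_eq0 mulrN => /eqP ->.
have -> : n.+1%:R ^+ n.+1 * sin t * (- sin (n%:R * t)) ^+ n =
    n.+1%:R * sin t * (n.+1%:R * - sin (n%:R * t)) ^+ n by rewrite exprMn exprS; ring.
by rewrite sinnE exprMn exprS mulrA root_sin; ring.
Qed.

Lemma root_angle_le_even : ~~ odd n -> t <= pi - pi / n%:R.
Proof.
have [_ /andP[_ t_ltpi] _ _] := root.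
have n_gt0 := psi_polar_root_n_gt0; have n_pos : 0 < n%:R :> R by rewrite ltr0n.
move=> n_even; rewrite leNgt; apply/negP => t_gt.
set e := pi - t; have tE : t = pi - e by rewrite subKr.
have e_gt0 : 0 < e by rewrite subr_gt0.
have ne_lt : n%:R * e < pi.
  by rewrite mulrC -ltr_pdivlMr //; move: t_gt; rewrite /e; lra.
have sinSnE : sin (n.+1%:R * t) = sin (n.+1%:R * e).
  by rewrite tE sin_natr_mul_piB -signr_odd /= n_even expr1 opprK mul1r.
have sinnE : - sin (n%:R * t) = sin (n%:R * e).
  by rewrite tE sin_natr_mul_piB -signr_odd (negbTE n_even) expr0 mulN1r opprK.
have := @sin_mulSn_pow_lt R n e n_gt0 e_gt0 ne_lt.
rewrite -sinSnE root_sinSn_gt0 -sinnE -[sin e]sin_piB -tE -root_sin_pow ltxx.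
by move/(_ isT).
Qed.

Lemma root_angle_lt_even : ~~ odd n -> t < pi - 2 * pi / n%:R.
Proof.
have n_gt0 := psi_polar_root_n_gt0; have n_pos : 0 < n%:R :> R by rewrite ltr0n.
move=> n_even; rewrite ltNge; apply/negP => tge.
have n_ge2 : (2 <= n)%N by move: n_gt0 n_even; case: (n) => [|[]].
apply: (@root_angle_notin_band (n - 2)); first by rewrite oddB // addbF.
rewrite -natr1 natrB //.
rewrite (_ : (n%:R - 2%:R) * pi / n%:R = pi - 2 * pi / n%:R); last first.
  by field; exact: lt0r_neq0.
rewrite (_ : (n%:R - 2%:R + 1) * pi / n%:R = pi - pi / n%:R); last first.
  by field; exact: lt0r_neq0.
by rewrite tge root_angle_le_even.
Qed.

End RootAngle.

Section PolarForm.
Context {R : realType}.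
Local Open Scope complex_scope.
Implicit Types (x y r t : R) (a : R[i]).

Lemma polar_Complex x y : 0 < y ->
  exists r t, [/\ 0 < r, 0 < t < pi & x +i* y = (r * cos t) +i* (r * sin t)].
Proof.
move=> y_gt0; set r := Num.sqrt (x ^+ 2 + y ^+ 2).
have r2 : r ^+ 2 = x ^+ 2 + y ^+ 2 by rewrite sqr_sqrtr // addr_ge0 ?sqr_ge0.
have r_gt0 : 0 < r by rewrite sqrtr_gt0 ltr_wpDl ?sqr_ge0 ?exprn_gt0.
have /andP[xr_gt xr_lt] : -1 < x / r < 1.
  rewrite ltr_pdivlMr // ltr_pdivrMr // mulN1r mul1r -ltr_norml.
  by rewrite /r -sqrtr_sqr ltr_sqrt ?ltrDl ?exprn_gt0 // ltr_wpDl ?sqr_ge0 ?exprn_gt0.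
exists r, (acos (x / r)); split => //.
  by rewrite acos_gt0 ?acos_ltpi ?xr_lt ?xr_gt ?ltW.
congr (_ +i* _).
  by rewrite acosK ?in_itv /= ?ltW // mulrC divfK ?gt_eqF.
rewrite sin_acos ?ltW // (_ : 1 - (x / r) ^+ 2 = (y / r) ^+ 2); last first.
  by rewrite !expr_div_n r2; field; rewrite -r2 expf_neq0 ?gt_eqF.
by rewrite sqrtr_sqr ger0_norm ?divr_ge0 ?ltW // mulrC divfK ?gt_eqF.
Qed.

Lemma polarX r t (k : nat) :
  ((r * cos t) +i* (r * sin t)) ^+ k = (r ^+ k * cos (k%:R * t)) +i* (r ^+ k * sin (k%:R * t)).
Proof.
elim: k => [|k IHk]; first by rewrite expr0 mul0r cos0 sin0 mulr1 mulr0.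
rewrite exprSr IHk -natr1 mulrDl mul1r cosD sinD exprSr.
by simpc; congr (_ +i* _); ring.
Qed.

Lemma psi_rootE (n : nat) a :
  root (psi R n.+1) a = (a ^+ n * (a + n.+1%:R) == (n ^ n)%N%:R).
Proof. by rewrite /root /psi !hornerE subr_eq0. Qed.

Lemma psi_root_polar (n : nat) a : root (psi R n.+1) a -> 0 < complex.Im a ->
  exists r t, a = (r * cos t) +i* (r * sin t) /\ psi_polar_root n r t.
Proof.
case: a => x y; rewrite psi_rootE => /eqP root_eq /= y_gt0.
have [r [t [r_gt0 t_bd xyE]]] := @polar_Complex x y y_gt0.
rewrite xyE mulrDr -exprSr !polarX in root_eq.
rewrite -!(rmorph_nat (real_complex R)) natrX in root_eq; move: root_eq; simpc.
case=> root_Re root_Im.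
have {}root_Im : r * sin (n.+1%:R * t) + n.+1%:R * sin (n%:R * t) = 0.
  apply: (mulfI (expf_neq0 n (lt0r_neq0 r_gt0))).
  by rewrite mulr0 -root_Im exprS; ring.
exists r, t; split => //; split => //; apply/eqP; rewrite -subr_eq0 -root_Re.
have -> : sin t = sin (n.+1%:R * t) * cos (n%:R * t) - cos (n.+1%:R * t) * sin (n%:R * t).
  by rewrite -sinB -natr1 mulrDl mul1r addrAC subrr add0r.
apply/eqP; transitivity (r ^+ n * cos (n.+1%:R * t) *
    (r * sin (n.+1%:R * t) + n.+1%:R * sin (n%:R * t))); first by rewrite exprS; ring.
by rewrite root_Im mulr0.
Qed.

Lemma sin_le_cabs_addr (S r t : R) : 0 <= S -> 0 <= sin t ->
  S * sin t <= cabs (S%:C + (r * cos t) +i* (r * sin t)).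
Proof.
move=> S_ge0 sin_ge0; rewrite /cabs /= add0r.
rewrite -(ger0_norm (mulr_ge0 S_ge0 sin_ge0)) -sqrtr_sqr ler_sqrt; last first.
  by rewrite addr_ge0 ?sqr_ge0.
have -> : (S + r * cos t) ^+ 2 + (r * sin t) ^+ 2 = (r + S * cos t) ^+ 2 + (S * sin t) ^+ 2.
  apply/eqP; rewrite -subr_eq0; apply/eqP.
  transitivity ((r ^+ 2 - S ^+ 2) * (cos t ^+ 2 + sin t ^+ 2 - 1)); first by ring.
  by rewrite cos2Dsin2 subrr mulr0.
by rewrite lerDr sqr_ge0.
Qed.

Lemma lt_cabs_addr (S : R) a : 0 < S -> 0 <= complex.Re a -> 0 < complex.Im a ->
  S < cabs (S%:C + a).
Proof.
case: a => x y /= S_gt0 x_ge0 y_gt0; rewrite /cabs /= add0r.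
rewrite -[X in X < _](ger0_norm (ltW S_gt0)) -sqrtr_sqr ltr_sqrt; last first.
  by rewrite ltr_wpDl ?sqr_ge0 ?exprn_gt0.
apply: ltr_pwDr; first by rewrite exprn_gt0.
by rewrite ler_sqr ?nnegrE ?lerDl ?addr_ge0 // ltW.
Qed.

Lemma psi_root_dist_gt_even {n : nat} {a : R[i]} : odd n -> root (psi R n.+1) a ->
  0 < complex.Im a -> n.+1%:R * sin (pi / n%:R) < cabs (n.+1%:R + a).
Proof.
move=> n_odd /psi_root_polar/[apply] -[r [t [-> root]]].
have [_ /andP[t_gt0 t_ltpi] _ _] := root.
have t_gt := root_angle_gt root; have t_lt := root_angle_lt_odd root n_odd.
have sin_gt0 : 0 < sin t by rewrite sin_gt0_pi ?t_gt0.
rewrite -(rmorph_nat (real_complex R)).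
apply: lt_le_trans (sin_le_cabs_addr _ _ _ (ler0n _ _) (ltW sin_gt0)).
rewrite ltr_pM2l ?ltr0n // sin_lt_between ?t_gt ?t_lt //.
by rewrite divr_ge0 ?pi_ge0 ?ler0n /=; lra.
Qed.

Lemma psi_root_dist_gt_odd {n : nat} {a : R[i]} : ~~ odd n -> root (psi R n.+1) a ->
    0 < complex.Im a ->
  n.+1%:R < cabs (n.+1%:R + a) \/
  2 * pi / n%:R < pi / 2 :> R /\ n.+1%:R * sin (2 * pi / n%:R) < cabs (n.+1%:R + a).
Proof.
move=> n_even /psi_root_polar/[apply] -[r [t [aE root]]].
have [r_gt0 /andP[t_gt0 t_ltpi] _ _] := root.
have sin_gt0 : 0 < sin t by rewrite sin_gt0_pi ?t_gt0.
rewrite -(rmorph_nat (real_complex R)).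
have [cos_ge0|cos_lt0] := lerP 0 (cos t).
  by left; rewrite lt_cabs_addr ?ltr0n // aE /= ?mulr_ge0 ?mulr_gt0 // ltW.
right; rewrite aE.
have t_gt : pi / 2 < t.
  rewrite ltNge; apply/negP => t_le; move: cos_lt0; apply/negP; rewrite -leNgt.
  by rewrite cos_ge0_pihalf //; have := @pi_gt0 R; lra.
have t_lt := root_angle_lt_even root n_even.
have n_pos : 0 < n%:R :> R by rewrite ltr0n (psi_polar_root_n_gt0 root).
have pin_ge0 : 0 <= 2 * pi / n%:R :> R by rewrite divr_ge0 ?mulr_ge0 ?pi_ge0.
split; first lra.
apply: lt_le_trans (sin_le_cabs_addr _ _ _ (ler0n _ _) (ltW sin_gt0)).
by rewrite ltr_pM2l ?ltr0n // sin_lt_between //; apply/andP; split; lra.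
Qed.

End PolarForm.

Section ElementarySymmetric.
Context {K : comNzRingType}.
Implicit Types l : seq K.

Fixpoint esym1 l := if l is z :: l' then z + esym1 l' else 0.
Fixpoint esym2 l := if l is z :: l' then z * esym1 l' + esym2 l' else 0.
Fixpoint esym3 l := if l is z :: l' then z * esym2 l' + esym3 l' else 0.

Lemma sum_sqr_esym l : \sum_(z <- l) z ^+ 2 = esym1 l ^+ 2 - 2 * esym2 l.
Proof.
elim: l => [|z l IHl]; first by rewrite big_nil /=; ring.
by rewrite big_cons IHl /=; ring.
Qed.

Lemma sum_cube_esym l :
  \sum_(z <- l) z ^+ 3 = esym1 l ^+ 3 - 3 * esym1 l * esym2 l + 3 * esym3 l.
Proof.
elim: l => [|z l IHl]; first by rewrite big_nil /=; ring.
by rewrite big_cons IHl /=; ring.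
Qed.

(* The factor 'X^3 keeps the indices below from underflowing when size l < 3. *)
Lemma coef_prod_XsubC_esym l :
  let Q := 'X^3 * \prod_(z <- l) ('X - z%:P) in
  [/\ Q`_(size l + 3) = 1, Q`_(size l + 2) = - esym1 l, Q`_(size l + 1) = esym2 l,
      Q`_(size l) = - esym3 l & forall k, (size l + 3 < k)%N -> Q`_k = 0].
Proof.
elim: l => [|z l [Q3 Q2 Q1 Q0 Qk]] /=.
  rewrite big_nil mulr1 !coefXn oppr0; split => // k.
  by rewrite coefXn; case: k => // -[|[|[|]]].
set Q := 'X^3 * _ in Q3 Q2 Q1 Q0 Qk.
have -> : 'X^3 * \prod_(j <- z :: l) ('X - j%:P) = ('X - z%:P) * Q.
  by rewrite big_cons /Q mulrCA.
have coefS i : (('X - z%:P) * Q)`_i.+1 = Q`_i - z * Q`_i.+1.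
  by rewrite mulrBl coefB coefXM /= coefCM.
split.
- by rewrite addSn coefS Q3 Qk ?mulr0 ?subr0 //; lia.
- by rewrite addSn coefS -addnS Q2 Q3 mulr1; ring.
- by rewrite addSn coefS -addnS Q1 Q2; ring.
- by rewrite coefS -addn1 Q0 Q1; ring.
- case=> // k k_gt; rewrite coefS !Qk ?mulr0 ?subr0 //; lia.
Qed.

End ElementarySymmetric.

Lemma sum_sqr_cube_has_0_or_opp {R : realFieldType} (l : seq R) (S : R) :
    0 <= S -> l != [::] ->
    \sum_(x <- l) x ^+ 2 = S ^+ 2 -> \sum_(x <- l) x ^+ 3 = - S ^+ 3 ->
  has (fun x => (x == 0) || (x == - S)) l.
Proof.
move=> S_ge0 l_nz sum2 sum3; rewrite -[has _ _]negbK; apply/negP => /hasPn nroot.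
have term_gt0 x : x \in l -> 0 < x ^+ 2 * (x + S).
  move=> xl; have /norP[x_neq0 x_neqN] := nroot x xl.
  have x2_le : x ^+ 2 <= S ^+ 2.
    by rewrite -sum2 (big_rem x xl) /= lerDl sumr_ge0 // => y _; rewrite sqr_ge0.
  have Sx : - S <= x by nra.
  have Sx_lt : - S < x by rewrite lt_neqAle eq_sym x_neqN Sx.
  by rewrite mulr_gt0 ?exprn_even_gt0 ?x_neq0 ?orbT //; lra.
have sum_eq0 : \sum_(x <- l) x ^+ 2 * (x + S) = 0.
  transitivity (\sum_(x <- l) x ^+ 3 + S * \sum_(x <- l) x ^+ 2).
    by rewrite mulr_sumr -big_split; apply: eq_bigr => x _ /=; rewrite mulrDr -exprSr mulrC.
  by rewrite sum2 sum3; ring.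
case: l l_nz term_gt0 sum_eq0 {nroot sum2 sum3} => // y l _ term_gt0.
rewrite big_cons => /eqP; rewrite gt_eqF //.
apply: ltr_pwDl; first by rewrite term_gt0 ?mem_head.
by rewrite big_seq sumr_ge0 // => x xl; rewrite ltW // term_gt0 // inE xl orbT.
Qed.

Section PsiRoots.
Context {R : realType}.
Local Open Scope complex_scope.
Implicit Types a : R[i].

Lemma psi_monic_size (n : nat) : psi R n.+1 \is monic /\ size (psi R n.+1) = n.+2.
Proof.
have XnXs_monic : ('X^n * ('X + n.+1%:R%:P) : {poly R[i]}) \is monic.
  by rewrite monicMl ?monicXn ?monicXaddC.
have size_XnXs : size ('X^n * ('X + n.+1%:R%:P) : {poly R[i]}) = n.+2.
  by rewrite size_monicM ?monicXn ?size_polyXn ?size_XaddC ?addn2 // -size_poly_eq0 size_XaddC.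
have size_c : (size (- ((n ^ n)%N%:R)%:P : {poly R[i]}) < n.+2)%N.
  by rewrite size_polyN (leq_ltn_trans (size_polyC_leq1 _)).
rewrite /psi /=; split; last by rewrite size_polyDl size_XnXs.
by rewrite monicE lead_coefDl ?size_XnXs // (monicP XnXs_monic).
Qed.

Lemma coef_psi_n (n : nat) : (0 < n)%N -> (psi R n.+1)`_n = n.+1%:R.
Proof.
move=> n_gt0; rewrite /psi coefB coefXnM coefC ltnn subnn coefD coefX coefC /=.
by rewrite gtn_eqF // add0r subr0.
Qed.

Lemma coef_psi_mid (n i : nat) : (0 < i < n)%N -> (psi R n.+1)`_i = 0.
Proof.
by case/andP=> i_gt0 i_lt; rewrite /psi coefB coefXnM coefC i_lt gtn_eqF // subr0.
Qed.

Lemma psi_prod_XsubC {n : nat} : (3 <= n)%N -> exists rs : seq R[i],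
  [/\ psi R n.+1 = \prod_(z <- rs) ('X - z%:P), size rs = n.+1,
      \sum_(z <- rs) z ^+ 2 = n.+1%:R ^+ 2 & \sum_(z <- rs) z ^+ 3 = - n.+1%:R ^+ 3].
Proof.
case: n => [|[|[|n]]] // _; have [psi_monic psi_size] := psi_monic_size n.+3.
have [rs psiE] := closed_field_poly_normal (psi R n.+4).
rewrite (monicP psi_monic) scale1r in psiE.
have size_rs : size rs = n.+4.
  by move: psi_size; rewrite psiE size_prod_XsubC => -[].
have [_ Q2 Q1 Q0 _] := coef_prod_XsubC_esym rs.
rewrite -psiE size_rs !addnS addn0 !coefXnM !ltnS !ltn0 !subSS !subn0 in Q2 Q1 Q0.
have e1 : esym1 rs = - n.+4%:R.
  by apply/eqP; rewrite -eqr_oppLR -Q2 coef_psi_n.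
have e2 : esym2 rs = 0 by rewrite -Q1 coef_psi_mid // ltnSn.
have e3 : esym3 rs = 0 by apply/eqP; rewrite -oppr_eq0 -Q0 coef_psi_mid // ltnS leqnSn.
exists rs; split => //.
  by rewrite sum_sqr_esym e1 e2; ring.
by rewrite sum_cube_esym e1 e2 e3; ring.
Qed.

Lemma psi_root_conj (n : nat) a : root (psi R n.+1) a -> root (psi R n.+1) a^*.
Proof.
rewrite !psi_rootE => /eqP/(congr1 (@conjc R)).
by rewrite rmorphM rmorphXn rmorphD !rmorph_nat => ->.
Qed.

Lemma psi_upper_root {n : nat} : (3 <= n)%N ->
  exists a, root (psi R n.+1) a /\ 0 < complex.Im a.
Proof.
move=> n_ge3; have [rs [psiE size_rs sum2 sum3]] := psi_prod_XsubC n_ge3.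
have rootE z : root (psi R n.+1) z = (z \in rs) by rewrite psiE root_prod_XsubC.
apply: contrapT => no_upper.
have rs_real z : z \in rs -> complex.Im z = 0.
  rewrite -rootE => z_root; case: (ltrgtP (complex.Im z) 0) => // Im_z; case: no_upper.
    by exists z^*; rewrite psi_root_conj //; case: z z_root Im_z => x y /= _; rewrite oppr_gt0.
  by exists z.
pose l := map (@complex.Re R) rs.
have rsE : rs = map (real_complex R) l.
  by rewrite -map_comp map_id_in // => -[x y] /rs_real /= ->.
have sumE k : \sum_(z <- rs) z ^+ k = (\sum_(x <- l) x ^+ k)%:C.
  by rewrite rsE big_map rmorph_sum; apply: eq_bigr => x _; rewrite rmorphXn.
have l_sum2 : \sum_(x <- l) x ^+ 2 = n.+1%:R ^+ 2.
  by apply: (@complexI R); rewrite -sumE sum2 rmorphXn rmorph_nat.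
have l_sum3 : \sum_(x <- l) x ^+ 3 = - n.+1%:R ^+ 3.
  by apply: (@complexI R); rewrite -sumE sum3 rmorphN rmorphXn rmorph_nat.
have l_nz : l != [::] by rewrite -size_eq0 size_map size_rs.
have /hasP[x xl /orP[] /eqP xE] :=
  sum_sqr_cube_has_0_or_opp _ _ (ler0n _ _) l_nz l_sum2 l_sum3.
all: have : root (psi R n.+1) x%:C by rewrite rootE rsE map_f.
all: rewrite psi_rootE xE ?rmorph0 ?rmorphN ?rmorph_nat.
- rewrite expr0n /= gtn_eqF ?(leq_trans _ n_ge3) // mul0r eq_sym pnatr_eq0 expn_eq0.
  by case/andP=> /eqP n0; rewrite n0 in n_ge3.
- by rewrite addrC subrr mulr0 eq_sym pnatr_eq0 expn_eq0; case: (n) n_ge3.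
Qed.

End PsiRoots.

Section InfImage.
Local Open Scope classical_set_scope.

Lemma lt_inf_image_seq {R : realType} {T : eqType} (A : set T) (F : T -> R)
    (rs : seq T) (b : R) :
  A `<=` [set x | x \in rs] -> A !=set0 -> (forall x, A x -> b < F x) ->
  b < inf (F @` A).
Proof.
move=> Ars [x0 Ax0] bF.
apply: (@lt_le_trans _ _ (\big[Num.min/b + 1]_(x <- rs | `[< A x >]) F x)).
  by rewrite lt_bigmin ?ltrDl // => x /asboolP/bF.
apply: lb_le_inf; first by exists (F x0), x0.
by move=> _ [x Ax <-]; rewrite ge_bigmin_seq ?Ars //; apply/asboolP.
Qed.

End InfImage.

Lemma rho_m_gt {R : realType} (n : nat) (b : R) : (3 <= n)%N ->
  (forall a, root (psi R n.+1) a -> 0 < complex.Im a -> b < cabs (n.+1%:R + a)) ->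
  b < rho_m R n.+1.
Proof.
move=> n_ge3 b_lt; have [rs [psiE _ _ _]] := psi_prod_XsubC (R := R) n_ge3.
rewrite /rho_m; apply: (lt_inf_image_seq _ _ rs).
- by move=> a [a_root _]; rewrite /= -root_prod_XsubC -psiE.
- by have [a ?] := psi_upper_root (R := R) n_ge3; exists a.
- by move=> a [a_root a_Im]; exact: b_lt.
Qed.

Lemma pi_lt_natr_sin {R : realType} (n : nat) : (3 <= n)%N ->
  pi < n.+1%:R * sin (pi / n%:R) :> R.
Proof.
move=> n_ge3; have N3 : 3 <= n%:R :> R by rewrite (ler_nat R 3 n).
have pi_gt0 := @pi_gt0 R; have pi_lt := @pi_lt_17_5 R.
set x := pi / n%:R; have x_gt0 : 0 < x by rewrite divr_gt0 //; lra.
have piE : pi = n%:R * x by rewrite mulrC divfK // gt_eqF //; lra.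
have x2_lt : n.+1%:R * x ^+ 2 < 6.
  have pi2_lt : pi ^+ 2 < 289 / 25 :> R by nra.
  have : n.+1%:R * (n%:R * x) ^+ 2 < 6 * n%:R ^+ 2 by rewrite -piE -natr1; nra.
  by rewrite exprMn mulrCA mulrC ltr_pM2r // exprn_gt0 //; lra.
apply: (@lt_le_trans _ _ (n.+1%:R * (x - x ^+ 3 / 6))).
  rewrite {1}piE -natr1.
  have -> : (n%:R + 1) * (x - x ^+ 3 / 6) = n%:R * x + x * (1 - n.+1%:R * x ^+ 2 / 6).
    by rewrite -natr1; ring.
  by rewrite ltrDl mulr_gt0 //; lra.
by rewrite ler_pM2l ?ltr0n // sin_ge_taylor3 // ltW.
Qed.

Theorem mainTheorem18 (R : realType) (s : nat) (hs : (4 <= s)%N) :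
  (~~ odd s ->
     (s%:R * sin (pi / (s.-1)%:R) < rho_m R s) /\
     (pi < s%:R * sin (pi / (s.-1)%:R) :> R)) /\
  (odd s -> (7 <= s)%N ->
     s%:R * sin (2 * pi / (s.-1)%:R) < rho_m R s) /\
  (s = 5%N -> 5 * sin (2 * pi / 5) < rho_m R s).
Proof.
case: s hs => // n; rewrite ltnS => n_ge3.
have le_s x : n.+1%:R * sin x <= n.+1%:R :> R by rewrite ler_piMr ?ler0n ?sin_le1.
split; [|split] => /=.
- rewrite negbK => n_odd; split; last exact: pi_lt_natr_sin.
  by apply: rho_m_gt => // a; exact: psi_root_dist_gt_even.
- move=> n_even _; apply: rho_m_gt => // a a_root a_Im.
  have [|[_]] := psi_root_dist_gt_odd n_even a_root a_Im; last by [].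
  exact: le_lt_trans.
- move=> [n4]; subst n; apply: rho_m_gt => // a a_root a_Im.
  have [|[]] := psi_root_dist_gt_odd (n := 4) isT a_root a_Im; first exact: le_lt_trans.
  by rewrite (_ : 2 * pi / 4%:R = pi / 2 :> R) ?ltxx //; field.
Qed.
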